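(* Let $A_1,\dots,A_n\in\mathbb{C}^{s\times s}$ be matrices such that (i) $A_i^2=-\frac14\,\mathrm{id}_s$ for all $i$; (ii) $A_iA_j-A_jA_i=0$ whenever $i\ne j$ do not form an edge of the Dynkin diagram; (iii) $A_iA_j+A_jA_i=0$ whenever $i,j$ form an edge of the Dynkin diagram. Then the assignment $X_i\mapsto A_i$ extends to a Lie algebra representation $\rho:\mathfrak{k}\to\mathrm{End}(\mathbb{C}^s)$ which is a generalized spin representation, i.e. $\rho(X_i)^2=-\frac14\mathrm{id}_s$ for all $i$.
   Context: Let $A=(a_{ij})_{1\le i,j\le n}$ be a symmetrizable generalized Cartan matrix that is simply laced (all off-diagonal entries are $0$ or $-1$); its Dynkin diagram has vertices $1,\dots,n$ and an edge between $i\neq j$ iff $a_{ij}=-1$. Let $\mathfrak{g}=\mathfrak{g}(A)$ be the split real Kac–Moody algebra with Chevalley generators $e_i,f_i$ and Cartan subalgebra $\mathfrak h$, and let $\omega$ be its Chevalley involution ($\omega(e_i)=-f_i$, $\omega(f_i)=-e_i$, $\omega(h)=-h$ for $h\in\mathfrak h$). The maximal compact subalgebra is $\mathfrak{k}=\mathrm{Fix}(\omega)$. The Berman generators are $X_i:=e_i-f_i\in\mathfrak k$; $\mathfrak{k}$ is isomorphic to the real Lie algebra generated by $X_1,\dots,X_n$ subject to the relations $[X_i,[X_i,X_j]]=-X_j$ if $a_{ij}=-1$ and $[X_i,X_j]=0$ if $a_{ij}=0$. *)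

From HB Require Import structures.
From mathcomp Require Import all_boot all_order all_algebra.
From mathcomp Require Import reals.
From mathcomp Require Import complex.
Set Implicit Arguments. Unset Strict Implicit. Unset Printing Implicit Defensive.
Import Order.TTheory GRing.Theory Num.Theory.
Local Open Scope ring_scope.

Definition simply_laced_GCM (n : nat) (A : 'M[int]_n) : Prop :=
  (forall i, A i i = 2%:Z) /\
  (forall i j, i != j -> A i j = 0 \/ A i j = -1) /\
  (forall i j, A i j = 0 <-> A j i = 0).

(** Symmetrizable: A = D B with D positive diagonal, B symmetric;
    equivalently there are positive d_i with A i j / d_i = A j i / d_j. *)
Definition symmetrizable (n : nat) (A : 'M[int]_n) : Prop :=
  exists d : 'I_n -> rat, (forall i, 0 < d i) /\
    (forall i j, (A i j)%:~R * d j = (A j i)%:~R * d i :> rat).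

Inductive lterm (R : Type) (n : nat) : Type :=
| LGen of 'I_n
| LZero
| LAdd of lterm R n & lterm R n
| LScale of R & lterm R n
| LBr of lterm R n & lterm R n.
Arguments LZero {R n}.

(** The congruence defining k = real Lie algebra generated by X_i subject to
    the Berman relations: the smallest congruence containing the real vector
    space axioms, the Lie algebra axioms (bilinearity, alternating, Jacobi)
    and the relations [X_i,[X_i,X_j]] = -X_j if a_ij = -1, [X_i,X_j] = 0 if
    a_ij = 0. *)
Section KCong.
Variables (R : realType) (n : nat) (A : 'M[int]_n).
Local Notation T := (lterm R n).
Inductive kcong : T -> T -> Prop :=
| kc_refl t : kcong t t
| kc_sym t u : kcong t u -> kcong u t
| kc_trans t u v : kcong t u -> kcong u v -> kcong t v
| kc_add t t' u u' : kcong t t' -> kcong u u' -> kcong (LAdd t u) (LAdd t' u')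
| kc_scale r t t' : kcong t t' -> kcong (LScale r t) (LScale r t')
| kc_br t t' u u' : kcong t t' -> kcong u u' -> kcong (LBr t u) (LBr t' u')
| kc_addA t u v : kcong (LAdd t (LAdd u v)) (LAdd (LAdd t u) v)
| kc_addC t u : kcong (LAdd t u) (LAdd u t)
| kc_add0 t : kcong (LAdd LZero t) t
| kc_addN t : kcong (LAdd t (LScale (-1) t)) LZero
| kc_scale1 t : kcong (LScale 1 t) t
| kc_scaleA r s t : kcong (LScale r (LScale s t)) (LScale (r * s) t)
| kc_scaleDr r t u : kcong (LScale r (LAdd t u)) (LAdd (LScale r t) (LScale r u))
| kc_scaleDl r s t : kcong (LScale (r + s) t) (LAdd (LScale r t) (LScale s t))
| kc_brDl t u v : kcong (LBr (LAdd t u) v) (LAdd (LBr t v) (LBr u v))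
| kc_brDr t u v : kcong (LBr t (LAdd u v)) (LAdd (LBr t u) (LBr t v))
| kc_brZl r t u : kcong (LBr (LScale r t) u) (LScale r (LBr t u))
| kc_brZr r t u : kcong (LBr t (LScale r u)) (LScale r (LBr t u))
| kc_brxx t : kcong (LBr t t) LZero
| kc_jacobi t u v :
    kcong (LAdd (LBr t (LBr u v)) (LAdd (LBr u (LBr v t)) (LBr v (LBr t u)))) LZero
| kc_rel_edge i j : A i j = -1 ->
    kcong (LBr (LGen R i) (LBr (LGen R i) (LGen R j))) (LScale (-1) (LGen R j))
| kc_rel_nonedge i j : A i j = 0 ->
    kcong (LBr (LGen R i) (LGen R j)) LZero.
End KCong.

(** A map rho on formal expressions that is well defined on the quotient k
    (respects kcong), real-linear and bracket preserving, i.e. a Lie algebra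
    representation of k on C^s (C = R[i]), with commutator bracket on matrices. *)
Definition is_k_rep (R : realType) (n s : nat) (A : 'M[int]_n)
    (rho : lterm R n -> 'M[R[i]]_s) : Prop :=
  [/\ forall t u, kcong A t u -> rho t = rho u,
      rho LZero = 0,
      forall t u, rho (LAdd t u) = rho t + rho u,
      forall r t, rho (LScale r t) = (r%:C)%C *: rho t
    & forall t u, rho (LBr t u) = rho t *m rho u - rho u *m rho t].

Definition generalized_spin (R : realType) (n s : nat)
    (rho : lterm R n -> 'M[R[i]]_s) : Prop :=
  forall i, rho (LGen R i) *m rho (LGen R i) = (- 4%:R^-1) %:M.

From HB Require Import structures.
From mathcomp Require Import all_boot all_order all_algebra.
From mathcomp Require Import reals.
From mathcomp Require Import complex.
Set Implicit Arguments. Unset Strict Implicit. Unset Printing Implicit Defensive.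
Import Order.TTheory GRing.Theory Num.Theory.
Local Open Scope ring_scope.

(** The Berman presentation makes [k] the free real Lie algebra on the [X_i]
    modulo the Berman relations, so any assignment [X_i |-> A_i] into the
    commutator Lie algebra of matrices that satisfies those relations extends
    to a representation. For non-edges the relation is the commutation (ii).
    For an edge, the anticommutation (iii) gives
    [[A_i, [A_i, A_j]] = 4 A_i^2 A_j], which is [- A_j] by (i). *)

Section RingCommutator.
Variable V : pzRingType.

Definition lie_br (x y : V) := x * y - y * x.

Lemma lie_br_jacobi (x y z : V) :
  lie_br x (lie_br y z) + (lie_br y (lie_br z x) + lie_br z (lie_br x y)) = 0.
Proof.
rewrite /lie_br !(mulrBr, mulrBl) !mulrA !opprB !addrA.
(* pair each of the six monomials with its opposite *)
by rewrite (ACl ((1*12)*(7*2)*(3*10)*(5*4)*(9*8)*(11*6))) /= !subrr !addr0.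
Qed.

Lemma lie_br_anticomm (x y : V) :
  x * y + y * x = 0 -> lie_br x (lie_br x y) = x * x * y *+ 4.
Proof.
move=> /eqP; rewrite addrC addr_eq0 => /eqP yx.
have br_xy : lie_br x y = x * y *+ 2 by rewrite /lie_br yx opprK mulr2n.
rewrite br_xy /lie_br mulrnAr mulrnAl -mulrnBl -mulrA yx mulrN mulrA opprK.
by rewrite -mulr2n -mulrnA.
Qed.

End RingCommutator.

Lemma lie_br_spin_anticomm (F : numFieldType) (s : nat) (x y : 'M[F]_s) :
  x * x = (- 4%:R^-1)%:M -> x * y + y * x = 0 -> lie_br x (lie_br x y) = - y.
Proof.
move=> xx anti; rewrite lie_br_anticomm // xx -mulmxE mul_scalar_mx.
by rewrite scalerMnl mulNrn -[4^-1 *+ 4]mulr_natr mulVf ?scaleN1r ?pnatr_eq0.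
Qed.

Section Evaluation.
Variables (R : realType) (n s : nat) (M : 'I_n -> 'M[R[i]]_s).

Fixpoint lterm_eval (t : lterm R n) : 'M[R[i]]_s :=
  match t with
  | LGen k => M k
  | LZero => 0
  | LAdd a b => lterm_eval a + lterm_eval b
  | LScale r a => (r%:C)%C *: lterm_eval a
  | LBr a b => lie_br (lterm_eval a) (lterm_eval b)
  end.

Variable A : 'M[int]_n.
Hypothesis M_edge :
  forall i j, A i j = -1 -> lie_br (M i) (lie_br (M i) (M j)) = - M j.
Hypothesis M_nonedge : forall i j, A i j = 0 -> lie_br (M i) (M j) = 0.

Lemma lterm_eval_kcong t u : kcong A t u -> lterm_eval t = lterm_eval u.
Proof.
elim=> {t u} /=; rewrite /lie_br -?mulmxE.
- by [].
- by move=> t u _ ->.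
- by move=> t u v _ -> _ ->.
- by move=> t t' u u' _ -> _ ->.
- by move=> r t t' _ ->.
- by move=> t t' u u' _ -> _ ->.
- by move=> t u v; rewrite addrA.
- by move=> t u; rewrite addrC.
- by move=> t; rewrite add0r.
- by move=> t; rewrite rmorphN1 scaleN1r subrr.
- by move=> t; rewrite rmorph1 scale1r.
- by move=> r r' t; rewrite scalerA rmorphM.
- by move=> r t u; rewrite scalerDr.
- by move=> r r' t; rewrite rmorphD scalerDl.
- by move=> t u v; rewrite mulmxDl mulmxDr opprD addrACA.
- by move=> t u v; rewrite mulmxDl mulmxDr opprD addrACA.
- by move=> r t u; rewrite -scalemxAl -scalemxAr scalerBr.
- by move=> r t u; rewrite -scalemxAl -scalemxAr scalerBr.
- by move=> t; rewrite subrr.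
- by move=> t u v; rewrite mulmxE; apply: lie_br_jacobi.
- by move=> i j /M_edge; rewrite rmorphN1 scaleN1r mulmxE.
- by move=> i j /M_nonedge; rewrite mulmxE.
Qed.

Lemma lterm_eval_k_rep : is_k_rep A lterm_eval.
Proof.
by split=> //; apply: lterm_eval_kcong.
Qed.

End Evaluation.

Theorem corollary2p4 (R : realType) (n s : nat) (A : 'M[int]_n)
  (hA : simply_laced_GCM A) (hsym : symmetrizable A)
  (M : 'I_n -> 'M[R[i]]_s)
  (h1 : forall k, M k *m M k = (- 4%:R^-1) %:M)
  (h2 : forall k l, k != l -> A k l = 0 -> M k *m M l - M l *m M k = 0)
  (h3 : forall k l, A k l = -1 -> M k *m M l + M l *m M k = 0) :
  exists rho : lterm R n -> 'M[R[i]]_s,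
    [/\ is_k_rep A rho, (forall k, rho (LGen R k) = M k)
      & generalized_spin rho].
Proof.
have [A_diag _] := hA.
have M_edge k l : A k l = -1 -> lie_br (M k) (lie_br (M k) (M l)) = - M l.
  by move=> /h3 anti; apply: lie_br_spin_anticomm; rewrite -mulmxE.
have M_nonedge k l : A k l = 0 -> lie_br (M k) (M l) = 0.
  move=> Akl; rewrite /lie_br -mulmxE h2 //.
  by apply: contra_eqN Akl => /eqP <-; rewrite A_diag.
by exists (lterm_eval M); split=> //; apply: lterm_eval_k_rep M_edge M_nonedge.
Qed.
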